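(* Let $\mathcal F_n$ be a class of real-valued functions of $v$, and let $\{q_{k,n,\jmath}\}$, $1\le \jmath\le \mathcal J$, $1\le k\le k_{n,\jmath}$, be functions satisfying $\sup_{1\le k\le k_{n,\jmath}}\sup_{P\in\mathbf P}\|q_{k,n,\jmath}\|_{L^\infty_P}\le B_n$ for all $1\le\jmath\le\mathcal J$, with $B_n\ge 1$. Define $$\mathcal G_n\equiv\{f(x)q_{k,n,\jmath}(z_\jmath): f\in\mathcal F_n,\ 1\le\jmath\le\mathcal J,\ 1\le k\le k_{n,\jmath}\}.$$ Then for all $\epsilon>0$ and all $P\in\mathbf P$, $$N_{[\,]}(\epsilon,\mathcal G_n,\|\cdot\|_{L^2_P})\le k_n\times N_{[\,]}(\epsilon/B_n,\mathcal F_n,\|\cdot\|_{L^2_P}).$$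
   Context: Observations are $V=(X,Z)$ with $X\in\mathbf R^{d_x}$ and $Z=(Z_1,\dots,Z_{\mathcal J})$, $Z_\jmath\in\mathbf R^{d_{z_\jmath}}$; $\mathbf P$ is a family of distributions of $V$. $k_n\equiv\sum_{\jmath=1}^{\mathcal J}k_{n,\jmath}$. For $q\ge1$, $\|f\|_{L^q_P}^q=E_P|f(V)|^q$. An $\epsilon$-bracket under $\|\cdot\|_{L^2_P}$ is a set $\{f: L\le f\le U\}$ with $\|U-L\|_{L^2_P}<\epsilon$; $N_{[\,]}(\epsilon,\mathcal G,\|\cdot\|_{L^2_P})$ is the smallest number of $\epsilon$-brackets needed to cover $\mathcal G$. *)

From HB Require Import structures.
From mathcomp Require Import all_boot all_order all_algebra.
From mathcomp Require Import all_classical all_reals all_analysis.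
Set Implicit Arguments. Unset Strict Implicit. Unset Printing Implicit Defensive.
Import Order.TTheory GRing.Theory Num.Theory.
Local Open Scope classical_set_scope.
Local Open Scope ring_scope.

Definition LpNorm d (T : measurableType d) (R : realType)
  (P : probability T R) (p : \bar R) (g : T -> R) : \bar R :=
  Lnorm P p (EFin \o g).

Definition bracket_cover d (T : measurableType d) (R : realType)
  (P : probability T R) (eps : R) (G : set (T -> R)) (n : nat) : Prop :=
  exists (L U : 'I_n -> T -> R),
    (forall i, measurable_fun setT (L i) /\ measurable_fun setT (U i) /\
       (LpNorm P 2%:E (fun v => (U i v - L i v)%R) < eps%:E)%E) /\
    (forall g, G g -> exists i : 'I_n, forall v, L i v <= g v <= U i v).

(* Bracketing number N_[](eps, G, L^2_P): the smallest such n, +oo if none. *)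
Definition bracketing_number d (T : measurableType d) (R : realType)
  (P : probability T R) (eps : R) (G : set (T -> R)) : \bar R :=
  ereal_inf [set (n%:R)%:E | n in [set n | bracket_cover P eps G n]].

Definition product_class d (T : measurableType d) (R : realType)
  (J : nat) (kn : 'I_J -> nat) (dz : 'I_J -> measure_display)
  (Tz : forall j : 'I_J, measurableType (dz j))
  (zproj : forall j : 'I_J, T -> Tz j)
  (q : forall j : 'I_J, 'I_(kn j) -> Tz j -> R)
  (F : set (T -> R)) : set (T -> R) :=
  [set g | exists f, F f /\ exists (j : 'I_J) (k : 'I_(kn j)),
     g = (fun v => f v * q j k (zproj j v))].

From HB Require Import structures.
From mathcomp Require Import all_boot all_order all_algebra.
From mathcomp Require Import all_classical all_reals all_analysis.
From mathcomp Require Import measurable_realfun.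
Set Implicit Arguments. Unset Strict Implicit. Unset Printing Implicit Defensive.
Import Order.TTheory GRing.Theory Num.Theory.
Local Open Scope classical_set_scope.
Local Open Scope ring_scope.

(* If [L <= f <= U] then [f q] lies between [min (L q) (U q)] and
   [max (L q) (U q)], a bracket of width [|U - L| |q| <= B |U - L|] (P-a.e.).
   Taking the product of a bracket cover of [F] at scale [eps / B] with the
   [k_n] multipliers therefore gives a bracket cover of [G_n] at scale [eps]. *)

Section BracketingNumber.
Variables (d : measure_display) (T : measurableType d) (R : realType).
Variables (P : probability T R) (eps : R) (G : set (T -> R)).

Lemma bracket_cover_fintype (I : finType) (L U : I -> T -> R) :
  (forall i, measurable_fun setT (L i) /\ measurable_fun setT (U i) /\
       (LpNorm P 2%:E (fun v => (U i v - L i v)%R) < eps%:E)%E) ->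
  (forall g, G g -> exists i : I, forall v, L i v <= g v <= U i v) ->
  bracket_cover P eps G #|I|.
Proof.
move=> LU_small LU_cover.
exists (fun i => L (enum_val i)), (fun i => U (enum_val i)).
split=> [i|g /LU_cover[i gi]]; first exact: LU_small.
by exists (enum_rank i); rewrite enum_rankK.
Qed.

Lemma bracket_cover_set0 : G = set0 -> bracket_cover P eps G 0.
Proof. by move=> ->; exists (fun=> 0), (fun=> 0); split=> [[]|]. Qed.

Lemma bracketing_number_le (n : nat) :
  bracket_cover P eps G n -> (bracketing_number P eps G <= n%:R%:E)%E.
Proof. by move=> covn; apply: ge_ereal_inf; exists n%:R%:E => //; exists n. Qed.

Lemma bracketing_number_attained (n : nat) : bracket_cover P eps G n ->
  exists m, bracket_cover P eps G m /\ bracketing_number P eps G = m%:R%:E.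
Proof.
move=> covn.
have ex_cover : exists n, `[< bracket_cover P eps G n >] by exists n; apply/asboolP.
have [m /asboolP covm m_min] := find_ex_minn ex_cover.
exists m; split=> //; apply/eqP; rewrite eq_le bracketing_number_le //=.
apply: le_ereal_inf_tmp => _ [k covk <-].
by rewrite lee_fin ler_nat; apply: m_min; apply/asboolP.
Qed.

Lemma bracketing_number_pinfty :
  ~ (exists n, bracket_cover P eps G n) -> bracketing_number P eps G = +oo%E.
Proof.
move=> nocover; rewrite /bracketing_number.
suff -> : [set n | bracket_cover P eps G n] = set0 by rewrite image_set0 ereal_inf0.
by apply/seteqP; split=> // n covn; apply: nocover; exists n.
Qed.

End BracketingNumber.

Lemma mulr_between_minmax (R : realDomainType) (a b x c : R) : a <= x <= b ->
  Num.min (a * c) (b * c) <= x * c <= Num.max (a * c) (b * c).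
Proof.
move=> /andP[ax xb]; have [c0|c0] := leP 0 c.
  by rewrite ge_min le_max (ler_wpM2r c0 ax) (ler_wpM2r c0 xb) orbT.
by rewrite ge_min le_max (ler_wnM2r (ltW c0) ax) (ler_wnM2r (ltW c0) xb) !orbT.
Qed.

Definition mul_bracket_lo (T : Type) (R : realDomainType) (L U c : T -> R) v :=
  Num.min (L v * c v) (U v * c v).
Definition mul_bracket_hi (T : Type) (R : realDomainType) (L U c : T -> R) v :=
  Num.max (L v * c v) (U v * c v).

Lemma normr_maxr_minr (R : realDomainType) (a b : R) :
  `|Num.max a b - Num.min a b| = `|b - a|.
Proof. by rewrite maxEle minEle; case: ifP => // _; rewrite distrC. Qed.

Section LpNormBounds.
Variables (d : measure_display) (T : measurableType d) (R : realType).
Variable (P : probability T R).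

Lemma LpNorm_infty_ae_le (g : T -> R) (B : R) :
  (LpNorm P +oo%E g <= B%:E)%E -> {ae P, forall x, `|g x| <= B}.
Proof.
rewrite /LpNorm unlock /Lnorm /= ifT; last by rewrite probability_setT lte01.
by move/ess_sup_inf.ess_supP; apply: filterS => x /=; rewrite lee_fin.
Qed.

Lemma LpNorm2_ae_le_mul (w h : T -> R) (B : R) : 0 <= B ->
  measurable_fun setT w -> measurable_fun setT h ->
  {ae P, forall x, `|w x| <= B * `|h x|} ->
  (LpNorm P 2%:E w <= B%:E * LpNorm P 2%:E h)%E.
Proof.
move=> B0 mw mh w_le.
rewrite /LpNorm unlock /Lnorm /=.
have msq (g : T -> R) : measurable_fun setT g ->
    measurable_fun setT (fun x => (`|g x| `^ 2)%:E : \bar R).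
  move=> mg; apply/measurable_EFinP.
  rewrite (_ : (fun x => _) = (@powR R ^~ 2) \o (Num.norm \o g)) //.
  exact: measurableT_comp (measurable_powR _) (measurableT_comp _ mg).
have -> : B%:E = ((B `^ 2)%:E `^ 2^-1)%E.
  by rewrite poweR_EFin -powRrM mulfV// powRr1.
rewrite -poweRM ?lee_fin ?powR_ge0 ?integral_ge0//.
apply: gt0_ler_poweR.
- by rewrite invr_ge0.
- by rewrite in_itv /= leey andbT integral_ge0.
- by rewrite in_itv /= leey andbT mule_ge0 ?lee_fin ?powR_ge0 ?integral_ge0.
rewrite -ge0_integralZl_EFin ?powR_ge0//; last exact: msq.
apply: ae_ge0_le_integral => //; first exact: msq.
- by move=> x _; rewrite mule_ge0 ?lee_fin ?powR_ge0.
- exact/measurable_funeM/msq.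
apply: filterS w_le => x wx _.
by rewrite -EFinM lee_fin -powRM// ge0_ler_powR// ?nnegrE ?mulr_ge0.
Qed.

Lemma mul_bracket_small (L U c : T -> R) (B eps : R) : 0 < B ->
  measurable_fun setT L -> measurable_fun setT U -> measurable_fun setT c ->
  {ae P, forall x, `|c x| <= B} ->
  (LpNorm P 2%:E (fun v => (U v - L v)%R) < (eps / B)%:E)%E ->
  measurable_fun setT (mul_bracket_lo L U c) /\
  measurable_fun setT (mul_bracket_hi L U c) /\
  (LpNorm P 2%:E (fun v => (mul_bracket_hi L U c v - mul_bracket_lo L U c v)%R)
     < eps%:E)%E.
Proof.
move=> B0 mL mU mc c_le LU_small.
have mLc : measurable_fun setT (fun v => L v * c v) by exact: measurable_funM.
have mUc : measurable_fun setT (fun v => U v * c v) by exact: measurable_funM.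
have mlo : measurable_fun setT (mul_bracket_lo L U c) by exact: measurable_minr.
have mhi : measurable_fun setT (mul_bracket_hi L U c) by exact: measurable_maxr.
do 2!split=> //.
have width_le : (LpNorm P 2%:E (fun v => (mul_bracket_hi L U c v - mul_bracket_lo L U c v)%R)
    <= B%:E * LpNorm P 2%:E (fun v => (U v - L v)%R))%E.
  apply: LpNorm2_ae_le_mul (ltW B0) (measurable_funB mhi mlo) (measurable_funB mU mL) _.
  apply: filterS c_le => x cx.
  by rewrite normr_maxr_minr -mulrBl normrM mulrC ler_wpM2r.
apply: le_lt_trans width_le _.
by rewrite -[eps](divfK (lt0r_neq0 B0)) EFinM muleC lte_pmul2r.
Qed.

End LpNormBounds.

Section ProductClass.
Context {R : realType} {d : measure_display} {T : measurableType d}.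
Context {J : nat} {dz : 'I_J -> measure_display}.
Context {Tz : forall j : 'I_J, measurableType (dz j)} {zproj : forall j, T -> Tz j}.
Context {kn : 'I_J -> nat} {q : forall j : 'I_J, 'I_(kn j) -> Tz j -> R}.
Arguments q : clear implicits.

Let multiplier := {j : 'I_J & 'I_(kn j)}.

Lemma card_multiplier : #|{: multiplier}| = (\sum_(j < J) kn j)%N.
Proof.
rewrite card_tagged sumnE big_map big_enum /=.
by apply: eq_bigr => j _; rewrite card_ord.
Qed.

Lemma product_class_eq0 (F : set (T -> R)) :
  (\sum_(j < J) kn j)%N = 0%N -> product_class zproj q F = set0.
Proof.
move=> sum0; apply/seteqP; split=> // g [f [_ [j [k _]]]].
have : (kn j <= \sum_(j < J) kn j)%N by rewrite (bigD1 j) //= leq_addr.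
by rewrite sum0 leqn0 => /eqP knj0; case: k; rewrite knj0.
Qed.

Lemma bracket_cover_product_class (P : probability T R) (B eps : R)
    (F : set (T -> R)) (n : nat) :
  (forall j, measurable_fun setT (zproj j)) ->
  (forall j k, measurable_fun setT (q j k)) -> 0 < B ->
  (forall j k, (LpNorm P +oo%E (q j k \o zproj j) <= B%:E)%E) ->
  bracket_cover P (eps / B) F n ->
  bracket_cover P eps (product_class zproj q F) ((\sum_(j < J) kn j) * n)%N.
Proof.
move=> mzproj mq B0 q_le [L [U [LU_small LU_cover]]].
pose c (jk : multiplier) := q (tag jk) (tagged jk) \o zproj (tag jk).
rewrite -card_multiplier -[n in (_ * n)%N]card_ord -card_prod.
apply: (@bracket_cover_fintype _ _ _ P eps _ (multiplier * 'I_n)%type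
  (fun i => mul_bracket_lo (L i.2) (U i.2) (c i.1))
  (fun i => mul_bracket_hi (L i.2) (U i.2) (c i.1))).
- move=> [[j k] i]; have [mL [mU LUi_small]] := LU_small i.
  exact: mul_bracket_small B0 mL mU (measurableT_comp (mq j k) (mzproj j))
    (LpNorm_infty_ae_le (q_le j k)) LUi_small.
- move=> g [f [Ff [j [k ->]]]]; have [i fi] := LU_cover f Ff.
  by exists (Tagged (fun j => 'I_(kn j)) k, i) => v; exact: mulr_between_minmax.
Qed.

End ProductClass.

Theorem lemmaB1 (R : realType) (d : measure_display) (T : measurableType d)
  (J : nat) (dz : 'I_J -> measure_display)
  (Tz : forall j : 'I_J, measurableType (dz j))
  (zproj : forall j : 'I_J, T -> Tz j)
  (hzproj : forall j, measurable_fun setT (zproj j))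
  (Ps : set (probability T R))
  (F : set (T -> R)) (kn : 'I_J -> nat)
  (q : forall j : 'I_J, 'I_(kn j) -> Tz j -> R)
  (hqm : forall j k, measurable_fun setT (q j k))
  (B : R) (hB1 : 1 <= B)
  (hqB : forall (P : probability T R), Ps P -> forall (j : 'I_J) (k : 'I_(kn j)),
     (LpNorm P +oo%E (q j k \o zproj j) <= B%:E)%E) :
  forall (eps : R), 0 < eps -> forall (P : probability T R), Ps P ->
    (bracketing_number P eps (product_class zproj q F)
     <= ((\sum_(j < J) kn j)%N%:R)%:E * bracketing_number P (eps / B) F)%E.
Proof.
move=> eps _ P PsP; have B0 : 0 < B by exact: lt_le_trans hB1.
have [[n covF]|nocovF] := pselect (exists n, bracket_cover P (eps / B) F n).
  have [m [covFm ->]] := bracketing_number_attained covF.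
  have covG := bracket_cover_product_class hzproj hqm B0 (hqB P PsP) covFm.
  by rewrite -EFinM -natrM bracketing_number_le.
rewrite (bracketing_number_pinfty nocovF).
have [sum0|sum_gt0] := eqVneq (\sum_(j < J) kn j)%N 0%N.
  have covG0 : bracket_cover P eps (product_class zproj q F) 0.
    exact/bracket_cover_set0/product_class_eq0.
  by rewrite sum0 mul0e; exact: bracketing_number_le covG0.
by rewrite gt0_muley ?leey // lte_fin ltr0n lt0n.
Qed.
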